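(* Let $n\ge 1$ be an integer and let $A_1,A_2,A_4>0$ be constants. For each $\alpha$ in some interval $(0,\alpha_0)$ let $u^\alpha,\bar u^\alpha:\mathbb{R}\to\mathbb{R}$ be functions with $u^\alpha\in C^1(\mathbb{R})$ and $\bar u^\alpha\in C^{2n}(\mathbb{R})$ satisfying $$|u^\alpha|<A_1,\quad |\bar u^\alpha|<A_1,\qquad \int_{\mathbb{R}}|u^\alpha_x|\,dx<A_2,\quad \int_{\mathbb{R}}|\bar u^\alpha_x|\,dx<A_2,$$ $$\left\|\frac{\partial^j}{\partial x^j}\bar u^\alpha\right\|_{L^\infty}<\frac{A_4}{\alpha^j}\qquad\text{for } 1\le j\le 2n-1.$$ Let $f\in C^\infty(\mathbb{R})$ have compact support. Then $$\lim_{\alpha\to 0}\ \alpha^{2n}\int_{-\infty}^{\infty}\left(\frac{\partial^{2n}}{\partial x^{2n}}\bar u^\alpha\right)\bar u^\alpha_x\, f\,dx=0.$$ *)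

From HB Require Import structures.
From mathcomp Require Import all_boot all_order all_algebra.
From mathcomp Require Import all_classical all_reals all_analysis.
Set Implicit Arguments. Unset Strict Implicit. Unset Printing Implicit Defensive.
Import Order.TTheory GRing.Theory Num.Theory.
Import numFieldNormedType.Exports.
Local Open Scope classical_set_scope.
Local Open Scope ring_scope.

Definition Ck {R : realType} (k : nat) (f : R -> R) : Prop :=
  (forall j, (j < k)%N -> forall x : R, derivable (derive1n j f) x 1) /\
  continuous (derive1n k f).

Definition Cinf {R : realType} (f : R -> R) : Prop :=
  forall (j : nat) (x : R), derivable (derive1n j f) x 1.

Definition compact_supp {R : realType} (f : R -> R) : Prop :=
  exists M : R, forall x : R, M < `|x| -> f x = 0.

(* sup-norm (= L^infty norm for continuous g) strictly below c. *)
Definition sup_norm_lt {R : realType} (g : R -> R) (c : R) : Prop :=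
  exists b : R, b < c /\ forall x : R, `|g x| <= b.

From HB Require Import structures.
From mathcomp Require Import all_boot all_order all_algebra.
From mathcomp Require Import all_classical all_reals all_analysis.
From mathcomp Require Import measurable_realfun zify lra.
Import Order.TTheory GRing.Theory Num.Theory.
Import numFieldNormedType.Exports.
Local Open Scope classical_set_scope.
Local Open Scope ring_scope.
Set Implicit Arguments. Unset Strict Implicit.

(* Write T_g(p,q) for the integral of (d^p ubar)(d^q ubar) g.  Integration by
   parts against the compactly supported g gives
   T_g(p+1,q) = - T_g(p,q+1) - T_{g'}(p,q).
   For p, q >= 1 and p + q <= 2n, induction on p shows that
   alpha^(p+q-1) T_g(p,q) stays bounded: the base case T_g(1,q) is at most
   |ubar_x|_{L^1} |d^q ubar|_oo sup|g| <= A2 A4 alpha^-q sup|g|.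
   Shifting derivatives one at a time, T_f(2n,1) becomes T_f(n+1,n), which by
   symmetry equals - T_{f'}(n,n) / 2, plus terms T_{f'}(p,q) with p + q = 2n;
   each is O(alpha^(1-2n)), so alpha^2n T_f(2n,1) = O(alpha). *)

Lemma derivable1_continuous (R : realType) (g : R -> R) :
  (forall x, derivable g x 1) -> continuous g.
Proof.
by move=> dg x; apply/differentiable_continuous; rewrite -derivable1_diffP.
Qed.

Lemma Ck_continuous_derive1n (R : realType) (N j : nat) (g : R -> R) :
  Ck N g -> (j <= N)%N -> continuous (derive1n j g).
Proof.
move=> [dg cg]; rewrite leq_eqVlt => /orP[/eqP -> //|jN].
exact/derivable1_continuous/dg.
Qed.

Lemma sup_norm_lt_le (R : realType) (g : R -> R) (c : R) :
  sup_norm_lt g c -> forall x, `|g x| <= c.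
Proof. by move=> [b [bc gb]] x; rewrite (le_trans (gb x)) ?ltW. Qed.

Definition vanishes_outside (R : realType) (M : R) (g : R -> R) :=
  forall x, M <= `|x| -> g x = 0.

Lemma vanishes_outside_derive1 (R : realType) (M : R) (g : R -> R) :
  vanishes_outside M g -> vanishes_outside (M + 1) (derive1 g).
Proof.
move=> gM x xM; rewrite derive1E (@near_eq_derive _ _ _ g (cst 0)).
  by rewrite derive_cst.
exists 1 => //= y /= xy; apply: gM.
have : `|x| <= `|y| + `|x - y| by rewrite -{1}(subrKC y x) ler_normD.
lra.
Qed.

Lemma continuous_vanishes_outside_bounded (R : realType) (M : R) (g : R -> R) :
  continuous g -> vanishes_outside M g -> exists G, forall x, `|g x| <= G.
Proof.
move=> cg gM.
have /compact_bounded[G [_ Gg]] :=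
  continuous_compact (continuous_subspaceT cg) (@segment_compact _ (- M) M).
exists (`|G| + 1) => x; have [xM|xM] := leP M `|x|.
  by rewrite gM // normr0 addr_ge0.
apply: Gg; first by rewrite (le_lt_trans (ler_norm G)) // ltrDl.
by exists x => //=; rewrite in_itv /= -ler_norml ltW.
Qed.

Lemma Rintegral_vanishes_outside (R : realType) (M : R) (F : R -> R) :
  vanishes_outside M F ->
  \int[lebesgue_measure]_x F x = \int[lebesgue_measure]_(x in `[- M, M]) F x.
Proof.
move=> FM; rewrite [RHS]Rintegral_mkcond; apply: eq_Rintegral => x _.
rewrite patchE; case: ifPn => // /negP xM; rewrite FM //.
rewrite leNgt; apply/negP => /ltW xM'; apply: xM.
by rewrite inE /= in_itv /= -ler_norml.
Qed.

Lemma continuous_itv_integrable (R : realType) (F : R -> R) (a b : R) :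
  continuous F -> lebesgue_measure.-integrable `[a, b] (EFin \o F).
Proof.
move=> cF; apply: continuous_compact_integrable; first exact: segment_compact.
exact: continuous_subspaceT.
Qed.

Lemma derivable_oo_LRcontinuousT (R : realType) (F : R -> R) (a b : R) :
  (forall x, derivable F x 1) -> derivable_oo_LRcontinuous F a b.
Proof.
move=> dF; have cF := derivable1_continuous dF; split.
- by move=> x _; exact: dF.
- exact/cvg_at_right_filter/cF.
- exact/cvg_at_left_filter/cF.
Qed.

Lemma Rintegral_by_parts_vanishing (R : realType) (h k g : R -> R) (M : R) :
  (forall x, derivable h x 1) -> (forall x, derivable k x 1) ->
  (forall x, derivable g x 1) ->
  continuous (derive1 h) -> continuous (derive1 k) -> continuous (derive1 g) ->
  vanishes_outside M g ->
  \int[lebesgue_measure]_x (derive1 h x * k x * g x) =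
  - (\int[lebesgue_measure]_x (h x * derive1 k x * g x))
  - (\int[lebesgue_measure]_x (h x * k x * derive1 g x)).
Proof.
move=> dh dk dg ch' ck' cg' gM.
have ch := derivable1_continuous dh; have ck := derivable1_continuous dk.
have cg := derivable1_continuous dg.
have M_le_norm := ler_norm M; set L := `|M| + 1.
have L_gt0 : 0 < L := ltr_wpDl (normr_ge0 M) ltr01.
have gL : vanishes_outside L g by move=> x; rewrite /L => xL; apply: gM; lra.
have g'L : vanishes_outside L (derive1 g).
  by apply: vanishes_outside_derive1 => x xM; apply: gM; lra.
clearbody L.
rewrite !(@Rintegral_vanishes_outside _ L); last 3 first.
- by move=> x /g'L ->; rewrite mulr0.
- by move=> x /gL ->; rewrite mulr0.
- by move=> x /gL ->; rewrite mulr0.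
have dkg x : derivable (k * g) x 1 by apply: derivableM.
have kg' x : derive1 (k * g) x = derive1 k x * g x + k x * derive1 g x.
  by rewrite derive1E deriveM // -!derive1E addrC mulrC.
have ckg' : continuous (fun x => derive1 k x * g x + k x * derive1 g x).
  by move=> x; exact: continuousD (continuousM (ck' x) (cg x))
                                   (continuousM (ck x) (cg' x)).
have := @Rintegration_by_parts R (k * g) h _ (derive1 h) (- L) L
  (gtrN L_gt0) (continuous_subspaceT ckg')
  (derivable_oo_LRcontinuousT _ _ dkg) (fun x _ => kg' x)
  (continuous_subspaceT ch') (derivable_oo_LRcontinuousT _ _ dh)
  (fun x _ => erefl).
rewrite -[(k * g) L]/(k L * g L) -[(k * g) (- L)]/(k (- L) * g (- L)).
rewrite !gL ?normrN ?gtr0_norm // !mulr0 !mul0r subrr sub0r => E.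
transitivity (\int[lebesgue_measure]_(x in `[- L, L]) ((k * g) x * derive1 h x)).
  by apply: eq_Rintegral => x _; rewrite -[(k * g) x]/(k x * g x) [RHS]mulrC mulrA.
rewrite {}E; under eq_Rintegral do rewrite mulrDl.
rewrite RintegralD; last 3 first.
- exact: measurable_itv.
- apply: continuous_itv_integrable => x.
  exact: continuousM (continuousM (ck' x) (cg x)) (ch x).
- apply: continuous_itv_integrable => x.
  exact: continuousM (continuousM (ck x) (cg' x)) (ch x).
by rewrite opprD; congr (- _ - _); apply: eq_Rintegral => x _; rewrite mulrC mulrA.
Qed.

Lemma Rintegral_norm_le_L1 (R : realType) (D : set R) (F : R -> R) (A : R) :
  measurable D -> continuous F ->
  (\int[lebesgue_measure]_(x in setT) `|F x|%:E < A%:E)%E ->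
  \int[lebesgue_measure]_(x in D) `|F x| <= A.
Proof.
move=> mD cF FA.
have mF : measurable_fun setT (fun x => (`|F x|)%:E).
  apply/measurable_EFinP; apply: continuous_measurable_fun => x.
  exact: continuous_comp (cF x) (@norm_continuous _ _ (F x)).
have DT := @ge0_subset_integral _ _ _ lebesgue_measure D setT mD measurableT _
  mF (fun x _ => normr_ge0 _) (@subsetT _ D).
have I_ge0 := @integral_ge0 _ _ _ lebesgue_measure D (fun x => (`|F x|)%:E)
  (fun x _ => normr_ge0 _).
have I_fin : (\int[lebesgue_measure]_(x in D) `|F x|%:E)%E \is a fin_num.
  by rewrite ge0_fin_numE // (le_lt_trans DT) // (lt_le_trans FA) ?leey.
by rewrite -lee_fin /Rintegral fineK // (le_trans DT) // ltW.
Qed.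

Lemma Rintegral_mul_le_L1_sup (R : realType) (V W g : R -> R) (M c G A : R) :
  continuous V -> continuous W -> continuous g -> vanishes_outside M g ->
  (forall x, `|W x| <= c) -> (forall x, `|g x| <= G) ->
  (\int[lebesgue_measure]_(x in setT) `|V x|%:E < A%:E)%E ->
  `|\int[lebesgue_measure]_x (V x * W x * g x)| <= c * G * A.
Proof.
move=> cV cW cg gM Wc gG VA.
rewrite (@Rintegral_vanishes_outside _ M); last by move=> x /gM ->; rewrite mulr0.
have c_ge0 : 0 <= c := le_trans (normr_ge0 _) (Wc 0).
have G_ge0 : 0 <= G := le_trans (normr_ge0 _) (gG 0).
have cVWg : continuous (fun x => V x * W x * g x).
  by move=> x; exact: continuousM (continuousM (cV x) (cW x)) (cg x).
have cnorm (F : R -> R) : continuous F -> continuous (fun x => `|F x|).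
  by move=> cF x; exact: continuous_comp (cF x) (@norm_continuous _ _ (F x)).
apply: le_trans (le_normr_Rintegral _ (continuous_itv_integrable _ _ cVWg)) _.
  exact: measurable_itv.
apply: (@le_trans _ _ (\int[lebesgue_measure]_(x in `[- M, M]) (c * G * `|V x|))).
  apply: le_Rintegral.
  - exact: measurable_itv.
  - exact: continuous_itv_integrable (cnorm _ cVWg).
  - apply: continuous_itv_integrable => x.
    exact: continuousM (@cst_continuous _ _ (c * G) x) (cnorm _ cV x).
  move=> x _; rewrite !normrM [X in _ <= X]mulrC -mulrA.
  by apply: ler_wpM2l => //; apply: ler_pM.
rewrite RintegralZl; last 2 first.
- exact: measurable_itv.
- exact: continuous_itv_integrable (cnorm _ cV).
apply: ler_wpM2l; first exact: mulr_ge0.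
exact: Rintegral_norm_le_L1 (measurable_itv _) cV VA.
Qed.

Definition test_function (R : realType) (g : R -> R) :=
  Cinf g /\ exists M : R, vanishes_outside M g.

Lemma test_function_compact_supp (R : realType) (f : R -> R) :
  Cinf f -> compact_supp f -> test_function f.
Proof.
by move=> f_inf [M fM]; split=> //; exists (M + 1) => x xM; apply: fM; lra.
Qed.

Lemma test_function_derive1 (R : realType) (g : R -> R) :
  test_function g -> test_function (derive1 g).
Proof.
move=> [g_inf [M gM]]; split; first by move=> j x; rewrite -derive1Sn.
by exists (M + 1); exact: vanishes_outside_derive1.
Qed.

Lemma test_function_continuous (R : realType) (g : R -> R) :
  test_function g -> continuous g.
Proof. by move=> [g_inf _]; apply: derivable1_continuous => x; exact: g_inf 0%N x. Qed.

Definition mixed_integral (R : realType) (V g : R -> R) (p q : nat) : R :=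
  \int[lebesgue_measure]_x (derive1n p V x * derive1n q V x * g x).

Lemma mixed_integralC (R : realType) (V g : R -> R) (p q : nat) :
  mixed_integral V g p q = mixed_integral V g q p.
Proof. by apply: eq_Rintegral => x _; rewrite [_ * derive1n q V x]mulrC. Qed.

Lemma mixed_integral_parts (R : realType) (N p q : nat) (V g : R -> R) :
  Ck N V -> test_function g -> (p < N)%N -> (q < N)%N ->
  mixed_integral V g p.+1 q =
  - mixed_integral V g p q.+1 - mixed_integral V (derive1 g) p q.
Proof.
move=> V_Ck tg pN qN; have [[dV _] [g_inf [M gM]]] := (V_Ck, tg).
rewrite /mixed_integral !derive1nS.
apply: (@Rintegral_by_parts_vanishing _ _ _ _ M) => //.
- exact: dV.
- exact: dV.
- exact: g_inf 0%N.
- by rewrite -derive1nS; exact: Ck_continuous_derive1n V_Ck pN.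
- by rewrite -derive1nS; exact: Ck_continuous_derive1n V_Ck qN.
- exact/test_function_continuous/test_function_derive1.
Qed.

Section ScaledFamily.
Variables (R : realType) (N : nat) (a0 A2 A4 : R) (U : R -> R -> R).
Hypothesis U_Ck : forall a, 0 < a < a0 -> Ck N (U a).
Hypothesis U_L1 : forall a, 0 < a < a0 ->
  (\int[lebesgue_measure]_(x in setT) `|derive1 (U a) x|%:E < A2%:E)%E.
Hypothesis U_sup : forall a, 0 < a < a0 -> forall j, (1 <= j <= N.-1)%N ->
  sup_norm_lt (derive1n j (U a)) (A4 / a ^+ j).

Lemma mixed_integral1_scaled_bounded (q : nat) (g : R -> R) :
  test_function g -> (0 < q < N)%N ->
  exists K, forall a, 0 < a < a0 -> a ^+ q * `|mixed_integral (U a) g 1 q| <= K.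
Proof.
move=> tg /andP[q_gt0 qN]; have [_ [M gM]] := tg.
have [G gG] := continuous_vanishes_outside_bounded (test_function_continuous tg) gM.
exists (A4 * G * A2) => a ha; have a_gt0 : 0 < a by case/andP: ha.
have aq_neq0 : a ^+ q != 0 by rewrite expf_neq0 // gt_eqF.
have := Rintegral_mul_le_L1_sup
  (Ck_continuous_derive1n (j := 1) (U_Ck ha) (leq_trans q_gt0 (ltnW qN)))
  (Ck_continuous_derive1n (U_Ck ha) (ltnW qN)) (test_function_continuous tg) gM
  (sup_norm_lt_le (U_sup ha _)) gG (U_L1 ha).
move=> /(_ ltac:(lia)) /(ler_wpM2l (exprn_ge0 q (ltW a_gt0))).
by rewrite !mulrA [a ^+ q * A4]mulrC mulfK.
Qed.

Lemma mixed_integral_scaled_bounded (p q : nat) (g : R -> R) :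
  test_function g -> (0 < p)%N -> (0 < q)%N -> (p + q <= N)%N ->
  exists K, forall a, 0 < a < a0 ->
    a ^+ (p + q).-1 * `|mixed_integral (U a) g p q| <= K.
Proof.
case: p => [//|p]; elim: p q g => [|p IH] q g tg _ q_gt0 pqN.
  by apply: mixed_integral1_scaled_bounded => //; rewrite q_gt0.
have [K1 K1_bound] := IH q.+1 g tg erefl erefl ltac:(lia).
have [K2 K2_bound] := IH q _ (test_function_derive1 tg) erefl q_gt0 ltac:(lia).
exists (K1 + a0 * `|K2|) => a ha; have /andP[a_gt0 a_lt] := ha.
rewrite (mixed_integral_parts (U_Ck ha) tg); [|lia|lia].
have -> : ((p.+2 + q).-1 = (p.+1 + q.+1).-1)%N by lia.
apply: le_trans (ler_wpM2l (exprn_ge0 _ (ltW a_gt0)) (ler_normB _ _)) _.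
rewrite normrN mulrDr; apply: lerD; first exact: K1_bound.
have -> : ((p.+1 + q.+1).-1 = (p.+1 + q).-1.+1)%N by lia.
have a_ge0 := ltW a_gt0; rewrite exprS -mulrA; apply: ler_pM => //.
- by rewrite mulr_ge0 ?exprn_ge0.
- exact: ltW.
- exact: le_trans (K2_bound a ha) (ler_norm _).
Qed.

Lemma mixed_integral_scaled_linear (n j : nat) (g : R -> R) :
  (0 < n)%N -> (2 * n <= N)%N -> (j < n)%N -> test_function g ->
  exists K, forall a, 0 < a < a0 ->
    `|a ^+ (2 * n) * mixed_integral (U a) g (n.+1 + j) (n - j)| <= K * a.
Proof.
move=> n_gt0 nN; elim: j g => [|j IH] g jn tg.
  have [K K_bound] := mixed_integral_scaled_bounded (test_function_derive1 tg)
    n_gt0 n_gt0 ltac:(lia).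
  exists `|K| => a ha; have /andP[/ltW a_ge0 _] := ha.
  have := mixed_integral_parts (U_Ck ha) tg (p := n) (q := n) ltac:(lia) ltac:(lia).
  rewrite [mixed_integral _ g n n.+1]mixed_integralC addn0 subn0 => parts.
  have -> : mixed_integral (U a) g n.+1 n =
            - mixed_integral (U a) (derive1 g) n n / 2 by lra.
  have -> : (2 * n = (n + n).-1.+1)%N by lia.
  rewrite exprS -mulrA normrM ger0_norm // mulrC ler_wpM2r //.
  rewrite normrM normrM normrN normfV normr_nat ger0_norm ?exprn_ge0 //.
  have := K_bound a ha; have := ler_norm K.
  have : 0 <= a ^+ (n + n).-1 * `|mixed_integral (U a) (derive1 g) n n|.
    by rewrite mulr_ge0 ?exprn_ge0.
  rewrite mulrA; lra.
have [K1 K1_bound] := IH g ltac:(lia) tg.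
have [K2 K2_bound] := mixed_integral_scaled_bounded (test_function_derive1 tg)
  (p := n.+1 + j) (q := n - j.+1) erefl ltac:(lia) ltac:(lia).
exists (K1 + `|K2|) => a ha; have /andP[/ltW a_ge0 _] := ha.
have -> : (n.+1 + j.+1 = (n.+1 + j).+1)%N by lia.
rewrite (mixed_integral_parts (U_Ck ha) tg); [|lia|lia].
have -> : ((n - j.+1).+1 = n - j)%N by lia.
rewrite mulrDr !mulrN mulrDl; apply: le_trans (ler_normD _ _) _.
rewrite !normrN; apply: lerD; first exact: K1_bound.
have -> : (2 * n = (n.+1 + j + (n - j.+1)).-1.+1)%N by lia.
rewrite exprS -mulrA normrM ger0_norm // mulrC ler_wpM2r //.
rewrite normrM ger0_norm ?exprn_ge0 //.
exact: le_trans (K2_bound a ha) (ler_norm _).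
Qed.

End ScaledFamily.

Lemma cvg_at_right0_linear_bound (R : realType) (F : R -> R) (a0 K : R) :
  0 < a0 -> (forall a, 0 < a < a0 -> `|F a| <= K * a) -> F @ 0^'+ --> 0.
Proof.
move=> a0_gt0 FK; apply/cvgrPdist_lt => e e_gt0.
have K1_gt0 : 0 < `|K| + 1 := ltr_wpDl (normr_ge0 K) ltr01.
near=> a.
have a_gt0 : 0 < a by near: a; exact: nbhs_right_gt.
have a_lt : a < a0 by near: a; exact: nbhs_right_lt.
have a_small : a * (`|K| + 1) < e.
  by rewrite -ltr_pdivlMr //; near: a; apply: nbhs_right_lt; exact: divr_gt0.
rewrite sub0r normrN (le_lt_trans (FK a _)) ?a_gt0 //.
have := ler_norm K; move: a_small a_gt0; nra.
Unshelve. all: by end_near.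
Qed.

Theorem lemma2 (R : realType) (n : nat) (A1 A2 A4 alpha0 : R)
  (u ubar : R -> R -> R) (f : R -> R) :
  (1 <= n)%N -> 0 < A1 -> 0 < A2 -> 0 < A4 -> 0 < alpha0 ->
  (forall a : R, 0 < a < alpha0 ->
     Ck 1 (u a) /\ Ck (2 * n) (ubar a) /\
         (forall x, `|u a x| < A1) /\ (forall x, `|ubar a x| < A1) /\
         (\int[@lebesgue_measure R]_(x in setT) `|derive1 (u a) x|%:E < A2%:E)%E /\
         (\int[@lebesgue_measure R]_(x in setT) `|derive1 (ubar a) x|%:E < A2%:E)%E /\
       (forall j : nat, (1 <= j <= (2 * n).-1)%N ->
           sup_norm_lt (derive1n j (ubar a)) (A4 / a ^+ j))) ->
  Cinf f -> compact_supp f ->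
  (fun a : R => a ^+ (2 * n) *
     Rintegral (@lebesgue_measure R) setT
       (fun x => derive1n (2 * n) (ubar a) x * derive1 (ubar a) x * f x))
    @ 0^'+ --> (0 : R).
Proof.
move=> n_gt0 _ _ _ a0_gt0 bounds f_inf f_supp.
have ubar_Ck a : 0 < a < alpha0 -> Ck (2 * n) (ubar a).
  by move=> /bounds[_ []].
have ubar_L1 a : 0 < a < alpha0 ->
    (\int[lebesgue_measure]_(x in setT) `|derive1 (ubar a) x|%:E < A2%:E)%E.
  by move=> /bounds[_ [_ [_ [_ [_ []]]]]].
have ubar_sup a : 0 < a < alpha0 -> forall j, (1 <= j <= (2 * n).-1)%N ->
    sup_norm_lt (derive1n j (ubar a)) (A4 / a ^+ j).
  by move=> /bounds[_ [_ [_ [_ [_ []]]]]].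
have [K K_bound] := mixed_integral_scaled_linear ubar_Ck ubar_L1 ubar_sup
  (j := n.-1) n_gt0 (leqnn _) ltac:(lia) (test_function_compact_supp f_inf f_supp).
apply: (@cvg_at_right0_linear_bound _ _ _ K a0_gt0) => a /K_bound.
by have [-> ->] : (n.+1 + n.-1 = 2 * n /\ n - n.-1 = 1)%N by lia.
Qed.
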